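(* Let $r\ge c>0$, $n_0,\dots,n_r>0$, $m\ge0$, let $A=(a_0,\dots,a_r)$ be a complex $(c+1)\times(r+1)$ matrix of full rank with pairwise linearly independent columns, $l_i=(l_{i1},\dots,l_{in_i})$ tuples of positive integers, and $R(A,P_0):=\mathbb{C}[T_{ij},S_1,\dots,S_m]/\langle g_v;\ v\in\ker A\rangle$ with $g_v=\sum_i v_iT_i^{l_i}$, $T_i^{l_i}=\prod_jT_{ij}^{l_{ij}}$. Let $\mathbb{C}^{c+1}=V_1\oplus V_2$ be a decomposition into linear subspaces such that every column $a_i$ lies in $V_1$ or in $V_2$. (i) If $\dim V_1=1$, then $R(A,P_0)\cong R(A',P_0')$ as $\mathbb{C}$-algebras for data $(A',P_0')$ of the same kind (a matrix $A'$ with pairwise linearly independent columns and full row rank, exponent tuples, and $m'$ free variables) with $\operatorname{rk}A'<\operatorname{rk}A$ and $m'>m$. (ii) If $\dim V_1>1$ and $\dim V_2>1$, then $R(A,P_0)\cong R(A^{(1)},P_0^{(1)})\otimes R(A^{(2)},P_0^{(2)})$ as $\mathbb{C}$-algebras for suitably chosen data $(A^{(i)},P_0^{(i)})$ of the same kind with $\operatorname{rk}A^{(1)}+\operatorname{rk}A^{(2)}=\operatorname{rk}A$.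
   Context: $P_0$ denotes the matrix encoding the exponent tuples $l_0,\dots,l_r$ and the number $m$ of free variables $S_k$; the ring $R(A,P_0)$ depends only on $A$, the tuples $l_i$ and $m$. *)

From HB Require Import structures.
From mathcomp Require Import all_boot all_order all_algebra.
From mathcomp Require Import mpoly.
From mathcomp Require Import complex.
From mathcomp Require Import reals.

Unset Printing Implicit Defensive.

Import Order.TTheory GRing.Theory Num.Theory.
Local Open Scope ring_scope.

Section Defs.
Variable R : realType.
Local Notation C := (complex R).

(** Finitely presented commutative C-algebras: C[x_0, ..., x_{nv-1}] / I,
    where I is given by its membership predicate. *)
Record presentation := Pres {
  pres_nv : nat;
  pres_ideal : {mpoly C[pres_nv]} -> Prop
}.

Definition ideal_gen (n : nat) (G : {mpoly C[n]} -> Prop) (p : {mpoly C[n]}) : Prop :=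
  exists (k : nat) (q g : 'I_k -> {mpoly C[n]}),
    (forall i, G (g i)) /\ p = \sum_(i < k) q i * g i.

(** C-algebra homomorphism C[x]/I -> C[y]/J induced by the substitution
    x_i |-> phi i (well defined when it maps I into J). *)
Definition subst (n k : nat) (phi : 'I_n -> {mpoly C[k]}) (p : {mpoly C[n]})
  : {mpoly C[k]} := comp_mpoly [tuple phi i | i < n] p.

Definition pres_iso (P1 P2 : presentation) : Prop :=
  exists (phi : 'I_(pres_nv P1) -> {mpoly C[pres_nv P2]})
         (psi : 'I_(pres_nv P2) -> {mpoly C[pres_nv P1]}),
    [/\ forall p, pres_ideal P1 p -> pres_ideal P2 (@subst _ _ phi p),
        forall q, pres_ideal P2 q -> pres_ideal P1 (@subst _ _ psi q),
        forall p, pres_ideal P1 (@subst _ _ psi (@subst _ _ phi p) - p) &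
        forall q, pres_ideal P2 (@subst _ _ phi (@subst _ _ psi q) - q)].

(** Tensor product over C of presented algebras:
    C[x, y] / (I C[x,y] + J C[x,y]). *)
Definition pres_tensor (P1 P2 : presentation) : presentation :=
  let n1 := pres_nv P1 in let n2 := pres_nv P2 in
  @Pres (n1 + n2)
    (@ideal_gen (n1 + n2) (fun g =>
       (exists p, pres_ideal P1 p /\
          g = @subst n1 (n1 + n2) (fun i : 'I_n1 => 'X_(lshift n2 i) : {mpoly C[n1 + n2]}) p)
    \/ (exists q, pres_ideal P2 q /\
          g = @subst n2 (n1 + n2) (fun j : 'I_n2 => 'X_(rshift n1 j) : {mpoly C[n1 + n2]}) q))).

Record data := Data {
  d_r : nat;
  d_c : nat;
  d_A : 'M[C]_(d_c.+1, d_r.+1);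
  d_n : 'I_d_r.+1 -> nat;
  d_l : forall i : 'I_d_r.+1, 'I_(d_n i) -> nat;
  d_m : nat
}.

Definition var_type (D : data) : finType :=
  ({i : 'I_(d_r D).+1 & 'I_(d_n D i)} + 'I_(d_m D))%type.

Definition nvars (D : data) : nat := #|{: var_type D}|.

Definition Var (D : data) (v : var_type D) : {mpoly C[nvars D]} :=
  'X_(enum_rank v).

Definition T (D : data) (i : 'I_(d_r D).+1) (j : 'I_(d_n D i)) : {mpoly C[nvars D]} :=
  Var D (inl (Tagged (fun i => 'I_(d_n D i)) j)).

Definition S (D : data) (k : 'I_(d_m D)) : {mpoly C[nvars D]} := Var D (inr k).

Definition Tmon (D : data) (i : 'I_(d_r D).+1) : {mpoly C[nvars D]} :=
  \prod_(j < d_n D i) T D i j ^+ d_l D i j.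

Definition gv (D : data) (v : 'cV[C]_(d_r D).+1) : {mpoly C[nvars D]} :=
  \sum_(i < (d_r D).+1) v i ord0 *: Tmon D i.

Definition RAP (D : data) : presentation :=
  @Pres (nvars D) (@ideal_gen (nvars D) (fun g => exists v, d_A D *m v = 0 /\ g = gv D v)).

Definition acol (D : data) (i : 'I_(d_r D).+1) : 'rV[C]_(d_c D).+1 :=
  (col i (d_A D))^T.

Definition data_ok (D : data) : Prop :=
  [/\ \rank (d_A D) = (d_c D).+1,
      forall i j : 'I_(d_r D).+1, i != j ->
        \rank (col_mx (acol D i) (acol D j)) = 2%N,
      forall i, (0 < d_n D i)%N &
      forall i (j : 'I_(d_n D i)), (0 < d_l D i j)%N].

End Defs.

Arguments pres_nv {R}. Arguments pres_ideal {R}.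
Arguments d_r {R}. Arguments d_c {R}. Arguments d_A {R}. Arguments d_n {R}.
Arguments d_l {R}. Arguments d_m {R}.
Arguments nvars {R}. Arguments Var {R}. Arguments T {R}. Arguments S {R}.
Arguments Tmon {R}. Arguments gv {R}. Arguments RAP {R}. Arguments acol {R}.
Arguments data_ok {R}. Arguments pres_iso {R}. Arguments pres_tensor {R}.

From HB Require Import structures.
From mathcomp Require Import all_boot all_order all_algebra.
From mathcomp Require Import mpoly complex.
From mathcomp Require Import reals.
Import GRing.Theory Num.Theory.
Local Open Scope ring_scope.

(* A kernel vector v of A splits along the columns lying in V1 and those
   lying in V2; since V1 and V2 meet only in 0, both parts are again kernel
   vectors.  Writing the columns in V_k in coordinates of a basis of V_k gives
   a matrix A^(k) of full row rank whose kernel is exactly the restriction of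
   ker A, so g_v = g_(v_1) + g_(v_2): the relations of R(A, P_0) are those of
   R(A^(1), .) together with those of R(A^(2), .), in disjoint sets of
   variables, which is the tensor decomposition (ii).  If dim V1 = 1, pairwise
   independence leaves a single column a_i0 in V1, every kernel vector vanishes
   at i0, and the variables T_i0j occur in no relation; they become free
   variables of the datum built from V2, which gives (i). *)

Section Presentations.
Variable R : realType.
Local Notation C := (complex R).
Local Notation subst := (@subst R _ _).
Local Notation ideal_gen := (@ideal_gen R _).
Local Notation Pres := (@Pres R).

Section SubstMorphism.
Variables (n k : nat) (phi : 'I_n -> {mpoly C[k]}).

HB.instance Definition _ :=
  GRing.RMorphism.copy (subst phi) (comp_mpoly [tuple phi i | i < n]).
HB.instance Definition _ :=
  GRing.Linear.copy (subst phi) (comp_mpoly [tuple phi i | i < n]).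

End SubstMorphism.

Section SubstitutionTheory.
Variables (n k : nat) (phi : 'I_n -> {mpoly C[k]}).

Lemma substX i : subst phi 'X_i = phi i.
Proof. by rewrite /subst comp_mpolyXU -tnth_nth tnth_mktuple. Qed.

Lemma eq_subst psi : phi =1 psi -> subst phi =1 subst psi.
Proof. by move=> E p; rewrite /subst (@eq_mktuple _ _ phi psi E). Qed.

Lemma subst_comp l (psi : 'I_k -> {mpoly C[l]}) p :
  subst psi (subst phi p) = subst (fun i => subst psi (phi i)) p.
Proof.
rewrite [subst phi p]comp_mpolyE linear_sum [RHS]comp_mpolyE.
apply: eq_bigr => m _; rewrite linearZ rmorph_prod; congr (_ *: _).
by apply: eq_bigr => i _; rewrite rmorphXn !tnth_mktuple.
Qed.

End SubstitutionTheory.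

Lemma subst_id n p : subst (fun i : 'I_n => 'X_i : {mpoly C[n]}) p = p.
Proof. exact: comp_mpoly_id. Qed.

Section IdealGen.
Variables (n : nat) (G : {mpoly C[n]} -> Prop).

Lemma ideal_gen0 : ideal_gen G 0.
Proof. by exists 0%N, (fun _ => 0), (fun _ => 0); split=> [[]|]; rewrite ?big_ord0. Qed.

Lemma mem_ideal_gen g : G g -> ideal_gen G g.
Proof. by move=> Gg; exists 1%N, (fun _ => 1), (fun _ => g); rewrite big_ord1 mul1r. Qed.

Lemma ideal_genD p q : ideal_gen G p -> ideal_gen G q -> ideal_gen G (p + q).
Proof.
move=> [k1 [q1 [g1 [G1 ->]]]] [k2 [q2 [g2 [G2 ->]]]].
pose pick T (f1 : 'I_k1 -> T) f2 (i : 'I_(k1 + k2)) :=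
  match split i with inl a => f1 a | inr b => f2 b end.
exists (k1 + k2)%N, (pick _ q1 q2), (pick _ g1 g2); split.
  by move=> i; rewrite /pick; case: split.
by rewrite big_split_ord /pick; congr (_ + _); apply: eq_bigr => i _;
  rewrite ?(unsplitK (inl _)) ?(unsplitK (inr _)).
Qed.

Lemma ideal_genMl a p : ideal_gen G p -> ideal_gen G (a * p).
Proof.
move=> [k1 [q1 [g1 [G1 ->]]]]; exists k1, (fun i => a * q1 i), g1; split=> //.
by rewrite mulr_sumr; apply: eq_bigr => i _; rewrite mulrA.
Qed.

End IdealGen.

Lemma ideal_gen_subst n k (G : {mpoly C[n]} -> Prop) (G' : {mpoly C[k]} -> Prop) phi :
    (forall g, G g -> ideal_gen G' (subst phi g)) ->
  forall p, ideal_gen G p -> ideal_gen G' (subst phi p).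
Proof.
move=> GG' p [k1 [q1 [g1 [G1 ->]]]]; rewrite rmorph_sum.
elim/big_rec: _ => [|i x _ Ix]; first exact: ideal_gen0.
by rewrite rmorphM; apply/ideal_genD/Ix/ideal_genMl/GG'.
Qed.

Lemma subst_reindexK n1 n2 (f : 'I_n1 -> 'I_n2) (g : 'I_n2 -> 'I_n1) : cancel f g ->
  cancel (subst (fun i => 'X_(f i) : {mpoly C[n2]})) (subst (fun i => 'X_(g i))).
Proof.
move=> fK p; rewrite subst_comp -[RHS]subst_id.
by apply: eq_subst => i; rewrite substX fK.
Qed.

Lemma pres_iso_reindex n1 n2 (G1 : {mpoly C[n1]} -> Prop) (G2 : {mpoly C[n2]} -> Prop)
    (f : 'I_n1 -> 'I_n2) (g : 'I_n2 -> 'I_n1) :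
    cancel f g -> cancel g f ->
    (forall p, G1 p -> ideal_gen G2 (subst (fun i => 'X_(f i)) p)) ->
    (forall q, G2 q -> ideal_gen G1 (subst (fun i => 'X_(g i)) q)) ->
  pres_iso (Pres n1 (ideal_gen G1)) (Pres n2 (ideal_gen G2)).
Proof.
move=> fK gK G12 G21; exists (fun i => 'X_(f i)), (fun i => 'X_(g i)).
split; do ?exact: ideal_gen_subst.
  by move=> p; rewrite subst_reindexK // subrr; apply: ideal_gen0.
by move=> q; rewrite subst_reindexK // subrr; apply: ideal_gen0.
Qed.

End Presentations.
Arguments pres_iso_reindex {R n1 n2 G1 G2 f g}.
Arguments ideal_gen_subst {R n k G G' phi}.

Lemma inj_surj_bij (T1 T2 : finType) (f : T1 -> T2) :
  injective f -> (forall y, exists x, f x = y) -> bijective f.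
Proof.
move=> f_inj f_surj; apply: (inj_card_bij f_inj).
rewrite -(card_codom f_inj); apply/subset_leq_card/subsetP => y _.
by have [x <-] := f_surj y; apply: codom_f.
Qed.

Lemma sum_codom (I J : finType) (V : nmodType) (f : J -> I) (F : I -> V) :
  injective f -> \sum_(i in codom f) F i = \sum_j F (f j).
Proof. by move=> f_inj; rewrite -big_uniq ?big_image // map_inj_uniq ?enum_uniq. Qed.
Arguments sum_codom {I J V f} F.

Section Reindex.
Variable R : realType.
Local Notation C := (complex R).
Local Notation var D := (@var_type R D).
Local Notation subst := (@subst R _ _).

Definition rename (D1 D2 : data R) (e : var D1 -> var D2) :
    {mpoly C[nvars D1]} -> {mpoly C[nvars D2]} :=
  subst (fun k => Var D2 (e (enum_val k))).
Arguments rename {D1 D2} e.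

Section RenameMorphism.
Variables (D1 D2 : data R) (e : var D1 -> var D2).
HB.instance Definition _ := GRing.RMorphism.copy (rename e) (subst _).
HB.instance Definition _ := GRing.Linear.copy (rename e) (subst _).
End RenameMorphism.

Lemma rename_Var D1 D2 (e : var D1 -> var D2) w : rename e (Var D1 w) = Var D2 (e w).
Proof. by rewrite /rename substX enum_rankK. Qed.

Lemma renameK D1 D2 (e : var D1 -> var D2) e' : cancel e e' -> cancel (rename e) (rename e').
Proof.
move=> eK p; rewrite {1}/rename subst_comp -[RHS]subst_id.
by apply: eq_subst => k; rewrite substX enum_rankK eK /Var enum_valK.
Qed.

End Reindex.
Arguments rename {R D1 D2} e.

Section SubData.
Variable R : realType.
Local Notation C := (complex R).
Local Notation var D := (@var_type R D).

Variables (D : data R) (r' : nat) (sg : 'I_r'.+1 -> 'I_(d_r D).+1).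

Definition sub_data c' (A' : 'M[C]_(c'.+1, r'.+1)) m' : data R :=
  @Data R r' c' A' (fun j => d_n D (sg j)) (fun j => d_l D (sg j)) m'.
Arguments sub_data {c'} A' m'.

Definition extend (w : 'cV[C]_r'.+1) : 'cV[C]_(d_r D).+1 := colsub sg 1%:M *m w.

Lemma mul_extend p (M : 'M[C]_(p, (d_r D).+1)) w : M *m extend w = colsub sg M *m w.
Proof. by rewrite mulmxA mulmx_colsub mulmx1. Qed.

Lemma gv_extend w : gv D (extend w) = \sum_j w j 0 *: Tmon D (sg j).
Proof.
rewrite /gv; under eq_bigr do rewrite mxE scaler_suml.
rewrite exchange_big; apply: eq_bigr => j _; rewrite (bigD1 (sg j)) //= big1 => [|i /negbTE ij].
  by rewrite !mxE eqxx mul1r addr0.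
by rewrite !mxE ij mul0r scale0r.
Qed.

Definition lift_Tvar (t : {j : 'I_r'.+1 & 'I_(d_n D (sg j))}) :
    {i : 'I_(d_r D).+1 & 'I_(d_n D i)} :=
  Tagged (fun i => 'I_(d_n D i)) (tagged t).

Lemma lift_Tvar_inj : injective sg -> injective lift_Tvar.
Proof.
move=> sg_inj [j1 x1] [j2 x2] E; have /sg_inj j12 : sg j1 = sg j2 := congr1 tag E.
by subst j2; rewrite (eq_from_Tagged E : x1 = x2).
Qed.

Definition sub_var c' (A' : 'M[C]_(c'.+1, r'.+1)) m' (le_m : (m' <= d_m D)%N)
    (w : var (sub_data A' m')) : var D :=
  match w with inl t => inl (lift_Tvar t) | inr s => inr (widen_ord le_m s) end.
Arguments sub_var {c'} A' {m'} le_m w.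

Lemma sub_var_inj c' (A' : 'M[C]_(c'.+1, r'.+1)) m' (le_m : (m' <= d_m D)%N) :
  injective sg -> injective (sub_var A' le_m).
Proof.
move=> sg_inj [t1|s1] [t2|s2] //= E; first by rewrite (lift_Tvar_inj sg_inj _ _ (inl_inj E)).
by congr inr; apply/val_inj; have /= := congr1 val (inr_inj E).
Qed.

Section RenameSubData.
Variables (c' : nat) (A' : 'M[C]_(c'.+1, r'.+1)) (m' : nat).
Variable e : var (sub_data A' m') -> var D.
Hypothesis eT : forall t, e (inl t) = inl (lift_Tvar t).

Lemma rename_Tmon j : rename e (Tmon (sub_data A' m') j) = Tmon D (sg j).
Proof. by rewrite /Tmon rmorph_prod; apply: eq_bigr => x _; rewrite rmorphXn /= rename_Var eT. Qed.

Lemma rename_gv w : rename e (gv (sub_data A' m') w) = \sum_j w j 0 *: Tmon D (sg j).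
Proof. by rewrite linear_sum; apply: eq_bigr => j _; rewrite linearZ /= rename_Tmon. Qed.

End RenameSubData.
End SubData.

Arguments sub_data {R} D {r'} sg {c'} A' m'.
Arguments extend {R D r'} sg w.
Arguments lift_Tvar {R D r'} sg t.
Arguments lift_Tvar_inj {R D r' sg}.
Arguments sub_var {R D r'} sg {c'} A' {m'} le_m w.
Arguments sub_var_inj {R D r' sg c' A' m' le_m}.

Section DropColumn.
Variable R : realType.
Local Notation C := (complex R).
Local Notation var D := (@var_type R D).
Variables (D : data R) (r' c' : nat) (sg : 'I_r'.+1 -> 'I_(d_r D).+1).
Variables (A' : 'M[C]_(c'.+1, r'.+1)) (i0 : 'I_(d_r D).+1).
Local Notation D' := (sub_data D sg A' (d_m D + d_n D i0)).
Hypotheses (sg_inj : injective sg) (codom_sg : forall i, (i \in codom sg) = (i != i0)).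

(* The free variables of D' beyond the first d_m D ones stand for the T_(i0 j). *)
Definition drop_var (w : var D') : var D :=
  match w with
  | inl t => inl (lift_Tvar sg t)
  | inr k => match split k with
             | inl s => inr s
             | inr x => inl (Tagged (fun i => 'I_(d_n D i)) x)
             end
  end.

Lemma drop_var_bij : bijective drop_var.
Proof.
apply: inj_surj_bij => [[t1|k1] [t2|k2] /=|].
- by move=> E; congr inl; apply: (lift_Tvar_inj sg_inj); apply: inl_inj E.
- case: split => //= x E; have /= sg_i0 := congr1 tag (inl_inj E).
  by move: (codom_f sg (tag t1)); rewrite codom_sg sg_i0 eqxx.
- case: split => //= x E; have /= sg_i0 := congr1 tag (inl_inj E).
  by move: (codom_f sg (tag t2)); rewrite codom_sg -sg_i0 eqxx.
- move=> E; congr inr; apply: (can_inj splitK); move: E.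
  case: (split k1) (split k2) => [s1|x1] [s2|x2] // E; first by rewrite (inr_inj E).
  by rewrite (eq_from_Tagged (inl_inj E)).
case=> [[i x]|s]; last by exists (inr (lshift _ s)); rewrite /= (unsplitK (inl _)).
have [ii0 | ] := eqVneq i i0.
  by subst i; exists (inr (rshift _ x)); rewrite /= (unsplitK (inr _)).
by rewrite -codom_sg => /codomP [j ij]; subst i; exists (inl (existT _ j x)).
Qed.

Lemma gv_drop_column (v : 'cV[C]_(d_r D).+1) : v i0 0 = 0 ->
  gv D v = rename drop_var (gv D' (rowsub sg v)).
Proof.
move=> v_i0; rewrite rename_gv //; under eq_bigr do rewrite mxE.
rewrite -(sum_codom (fun i => v i 0 *: Tmon D i)) // /gv (bigD1 i0) //= v_i0 scale0r add0r.
by apply: eq_bigl => i; rewrite codom_sg.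
Qed.

Lemma RAP_iso_drop_column :
    (forall v : 'cV_(d_r D).+1, d_A D *m v = 0 -> v i0 0 = 0 /\ A' *m rowsub sg v = 0) ->
    (forall w : 'cV_r'.+1, A' *m w = 0 -> d_A D *m extend sg w = 0) ->
  pres_iso (RAP D) (RAP D').
Proof.
move=> kerA kerA'; have [e dropK eK] := drop_var_bij.
have fK : cancel (fun k => enum_rank (e (enum_val k)))
                 (fun k => enum_rank (drop_var (enum_val k))).
  by move=> k; rewrite enum_rankK eK enum_valK.
have gK : cancel (fun k => enum_rank (drop_var (enum_val k)))
                 (fun k => enum_rank (e (enum_val k))).
  by move=> k; rewrite enum_rankK dropK enum_valK.
apply: (pres_iso_reindex fK gK).
- move=> _ [v [Av ->]]; have [v_i0 A'v] := kerA v Av.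
  rewrite -/(rename e _) gv_drop_column // renameK //.
  by apply: mem_ideal_gen; exists (rowsub sg v).
- move=> _ [w [A'w ->]]; rewrite -/(rename drop_var _) rename_gv // -gv_extend.
  by apply: mem_ideal_gen; exists (extend sg w); split; first exact: kerA'.
Qed.

End DropColumn.

Section TensorSplit.
Variable R : realType.
Local Notation C := (complex R).
Local Notation var D := (@var_type R D).
Local Notation subst := (@subst R _ _).
Variables (D : data R) (ra ca rb cb : nat).
Variables (sa : 'I_ra.+1 -> 'I_(d_r D).+1) (sb : 'I_rb.+1 -> 'I_(d_r D).+1).
Variables (Aa : 'M[C]_(ca.+1, ra.+1)) (Ab : 'M[C]_(cb.+1, rb.+1)).
Local Notation D1 := (sub_data D sa Aa 0).
Local Notation D2 := (sub_data D sb Ab (d_m D)).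
Local Notation ea := (sub_var sa Aa (leq0n (d_m D))).
Local Notation eb := (sub_var sb Ab (leqnn (d_m D))).
Hypotheses (sa_inj : injective sa) (sb_inj : injective sb).
Hypothesis codom_sab : forall i, (i \in codom sb) = (i \notin codom sa).

Definition tensor_var (k : 'I_(nvars D1 + nvars D2)) : var D :=
  match split k with inl a => ea (enum_val a) | inr b => eb (enum_val b) end.

Lemma tensor_var_lshift a : tensor_var (lshift _ a) = ea (enum_val a).
Proof. by rewrite /tensor_var (unsplitK (inl _)). Qed.

Lemma tensor_var_rshift b : tensor_var (rshift _ b) = eb (enum_val b).
Proof. by rewrite /tensor_var (unsplitK (inr _)). Qed.

Lemma tensor_var_bij : bijective tensor_var.
Proof.
apply: inj_surj_bij => [k1 k2|].
  have ea_eb a b : ea a <> eb b.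
    case: a => [t|[]//]; case: b => [t'|//] /= E.
    have /= sab := congr1 tag (inl_inj E).
    by move: (codom_f sb (tag t')); rewrite codom_sab -sab codom_f.
  rewrite /tensor_var => E; apply: (can_inj splitK); move: E.
  case: (split k1) (split k2) => [a1|b1] [a2|b2] // => [|/ea_eb|/esym/ea_eb|] // E.
    by rewrite (enum_val_inj (sub_var_inj sa_inj _ _ E)).
  by rewrite (enum_val_inj (sub_var_inj sb_inj _ _ E)).
case=> [[i x]|s]; last first.
  exists (rshift _ (enum_rank (inr s : var D2))).
  by rewrite tensor_var_rshift enum_rankK /=; congr inr; apply: val_inj.
have [/codomP [j ij] | ] := boolP (i \in codom sa).
  subst i; exists (lshift _ (enum_rank (inl (existT _ j x) : var D1))).
  by rewrite tensor_var_lshift enum_rankK.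
rewrite -codom_sab => /codomP [j ij]; subst i.
exists (rshift _ (enum_rank (inl (existT _ j x) : var D2))).
by rewrite tensor_var_rshift enum_rankK.
Qed.

Lemma gv_tensor (v : 'cV[C]_(d_r D).+1) :
  gv D v = rename ea (gv D1 (rowsub sa v)) + rename eb (gv D2 (rowsub sb v)).
Proof.
rewrite !rename_gv //; under eq_bigr do rewrite mxE; under [X in _ + X]eq_bigr do rewrite mxE.
rewrite -(sum_codom (fun i => v i 0 *: Tmon D i)) // -(sum_codom (fun i => v i 0 *: Tmon D i)) //.
by rewrite /gv (bigID (mem (codom sa))) /=; congr (_ + _); apply: eq_bigl => i; rewrite codom_sab.
Qed.

Lemma tensor_var_subst_lshift p :
  subst (fun k => 'X_(enum_rank (tensor_var k))) (subst (fun i => 'X_(lshift _ i)) p)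
  = rename ea p.
Proof. by rewrite subst_comp; apply: eq_subst => k; rewrite substX tensor_var_lshift. Qed.

Lemma tensor_var_subst_rshift q :
  subst (fun k => 'X_(enum_rank (tensor_var k))) (subst (fun i => 'X_(rshift _ i)) q)
  = rename eb q.
Proof. by rewrite subst_comp; apply: eq_subst => k; rewrite substX tensor_var_rshift. Qed.

Lemma RAP_iso_tensor :
    (forall v : 'cV_(d_r D).+1, d_A D *m v = 0 ->
       Aa *m rowsub sa v = 0 /\ Ab *m rowsub sb v = 0) ->
    (forall w : 'cV_ra.+1, Aa *m w = 0 -> d_A D *m extend sa w = 0) ->
    (forall w : 'cV_rb.+1, Ab *m w = 0 -> d_A D *m extend sb w = 0) ->
  pres_iso (RAP D) (pres_tensor (RAP D1) (RAP D2)).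
Proof.
move=> kerA kerAa kerAb; have [e tK eK] := tensor_var_bij.
have fK : cancel (fun k => e (enum_val k)) (fun k => enum_rank (tensor_var k)).
  by move=> k; rewrite eK enum_valK.
have gK : cancel (fun k => enum_rank (tensor_var k)) (fun k => e (enum_val k)).
  by move=> k; rewrite enum_rankK tK.
apply: (pres_iso_reindex fK gK).
- move=> _ [v [Av ->]]; have [Aav Abv] := kerA v Av.
  rewrite gv_tensor rmorphD /= -tensor_var_subst_lshift -tensor_var_subst_rshift.
  rewrite !subst_reindexK //; apply: ideal_genD; apply: mem_ideal_gen; [left|right].
    by exists (gv D1 (rowsub sa v)); split=> //; apply: mem_ideal_gen; exists (rowsub sa v).
  by exists (gv D2 (rowsub sb v)); split=> //; apply: mem_ideal_gen; exists (rowsub sb v).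
- move=> _ [[p [Ip ->]] | [q [Iq ->]]].
    rewrite tensor_var_subst_lshift; apply: (ideal_gen_subst _ _ Ip) => _ [w [Aw ->]].
    rewrite -/(rename ea _) rename_gv // -gv_extend.
    by apply: mem_ideal_gen; exists (extend sa w); split; first exact: kerAa.
  rewrite tensor_var_subst_rshift; apply: (ideal_gen_subst _ _ Iq) => _ [w [Aw ->]].
  rewrite -/(rename eb _) rename_gv // -gv_extend.
  by apply: mem_ideal_gen; exists (extend sb w); split; first exact: kerAb.
Qed.

End TensorSplit.

Lemma exists_enum (T : finType) (P : pred T) : (0 < #|P|)%N ->
  exists r (sg : 'I_r.+1 -> T), injective sg /\ forall x, P x = (x \in codom sg).
Proof.
move=> P_gt0; have P_eq := prednK P_gt0.
exists #|P|.-1, (fun j => enum_val (cast_ord P_eq j)); split.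
  by move=> j1 j2 /enum_val_inj /cast_ord_inj.
move=> x; apply/idP/codomP => [Px | [j ->]]; last exact: (enum_valP (cast_ord P_eq j)).
by exists (cast_ord (esym P_eq) (enum_rank_in Px x)); rewrite cast_ordKV enum_rankK_in.
Qed.

Lemma exists_row_basis {F : fieldType} {m n} {W : 'M[F]_(m, n)} {c'} : \rank W = c'.+1 ->
  exists B : 'M[F]_(c'.+1, n), row_free B /\ (B :=: W)%MS.
Proof.
move: (row_base W) (row_base_free W) (eq_row_base W) => B Bfree BW rW.
by rewrite rW in B Bfree BW *; exists B.
Qed.

Lemma tr_mulmx_cV (F : fieldType) p q (M : 'M[F]_(p, q)) (v : 'cV[F]_q) :
  (M *m v)^T = \sum_i v i 0 *: (col i M)^T.
Proof. by rewrite trmx_mul mulmx_sum_row; apply: eq_bigr => i _; rewrite tr_col mxE. Qed.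

Section ColumnSplit.
Variable R : realType.
Local Notation C := (complex R).
Variables (D : data R) (W Wc : 'M[C]_((d_c D).+1)).
Hypothesis dirW : mxdirect (W + Wc).
Hypothesis colW : forall i, (acol D i <= W)%MS \/ (acol D i <= Wc)%MS.
Local Notation inW i := (acol D i <= W)%MS.

Lemma cap_eq0 (x : 'rV[C]_(d_c D).+1) : (x <= W)%MS -> (x <= Wc)%MS -> x = 0.
Proof. by move=> xW xWc; apply/eqP; rewrite -submx0 -(mxdirect_addsP dirW) sub_capmx xW. Qed.

Lemma sum_inW_sub (u : 'I_(d_r D).+1 -> C) : ((\sum_(i | inW i) u i *: acol D i)%R <= W)%MS.
Proof. by apply: summx_sub => i iW; apply: scalemx_sub. Qed.

Lemma sum_notinW_sub (u : 'I_(d_r D).+1 -> C) :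
  ((\sum_(i | ~~ inW i) u i *: acol D i)%R <= Wc)%MS.
Proof. by apply: summx_sub => i /negP iW; apply: scalemx_sub; case: (colW i). Qed.

Lemma ker_partW (v : 'cV[C]_(d_r D).+1) : d_A D *m v = 0 -> \sum_(i | inW i) v i 0 *: acol D i = 0.
Proof.
move=> /(congr1 trmx); rewrite tr_mulmx_cV trmx0 (bigID (fun i => inW i)) /= => /eqP.
rewrite addr_eq0 => /eqP E; apply: cap_eq0; first exact: sum_inW_sub.
by rewrite E -scaleN1r scalemx_sub ?sum_notinW_sub.
Qed.

Hypothesis okD : data_ok D.

Lemma span_inW x : (x <= W)%MS -> exists u, x = \sum_(i | inW i) u i *: acol D i.
Proof.
move=> xW; have [rankA _ _ _] := okD; have /submxP [u Ex] : (x <= (d_A D)^T)%MS.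
  by rewrite submx_full // /row_full mxrank_tr rankA.
have {}Ex : x = \sum_i u 0 i *: acol D i.
  by rewrite Ex mulmx_sum_row; apply: eq_bigr => i _; rewrite -tr_col.
rewrite (bigID (fun i => inW i)) /= in Ex.
set S1 := \sum_(i | _) _ in Ex; set S2 := \sum_(i | _) _ in Ex.
exists (u 0); rewrite -/S1 Ex [S2]cap_eq0 ?addr0 ?sum_notinW_sub //.
have -> : S2 = x - S1 by rewrite Ex addrAC subrr add0r.
by rewrite addmx_sub // -scaleN1r scalemx_sub ?sum_inW_sub.
Qed.

Lemma exists_col_in : (0 < \rank W)%N -> exists i, inW i.
Proof.
rewrite lt0n mxrank_eq0 => /negP W_neq0.
case: (pickP (fun i => inW i)) => [i iW | noW]; first by exists i.
case: W_neq0; apply/eqP/row_matrixP => k; rewrite row0.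
by have [u ->] := span_inW _ (row_sub k W); rewrite big_pred0.
Qed.

Section Coordinates.
Variables (r' c' : nat) (sg : 'I_r'.+1 -> 'I_(d_r D).+1) (B : 'M[C]_(c'.+1, (d_c D).+1)).
Hypotheses (sg_inj : injective sg) (codom_sg : forall i, inW i = (i \in codom sg)).
Hypotheses (Bfree : row_free B) (BW : (B :=: W)%MS).

(* Column j holds the coordinates of a_(sg j) in the basis B of W. *)
Definition coord_mx : 'M[C]_(c'.+1, r'.+1) := ((colsub sg (d_A D))^T *m pinvmx B)^T.

Lemma row_tr_colsub j : row j (colsub sg (d_A D))^T = acol D (sg j).
Proof. by rewrite -tr_col col_colsub. Qed.

Lemma tr_colsub_sub : ((colsub sg (d_A D))^T <= W)%MS.
Proof. by apply/row_subP => j; rewrite row_tr_colsub codom_sg codom_f. Qed.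

Lemma tr_colsub_eqmx : ((colsub sg (d_A D))^T :=: W)%MS.
Proof.
apply/eqmxP; rewrite tr_colsub_sub; apply/row_subP => k.
have [u ->] := span_inW _ (row_sub k W).
rewrite (eq_bigl (mem (codom sg))) => [|i]; last by rewrite codom_sg.
rewrite (sum_codom (fun i => u i *: acol D i)) //; apply: summx_sub => j _.
by rewrite scalemx_sub // -row_tr_colsub row_sub.
Qed.

Lemma coord_mxK : coord_mx^T *m B = (colsub sg (d_A D))^T.
Proof. by rewrite trmxK mulmxKpV // BW tr_colsub_sub. Qed.

Lemma rank_coord_mx : \rank coord_mx = c'.+1.
Proof.
rewrite -mxrank_tr -(mxrankMfree _ Bfree) coord_mxK tr_colsub_eqmx -BW.
exact/eqP.
Qed.

Lemma ker_coord_mx (w : 'cV[C]_r'.+1) : (coord_mx *m w == 0) = (colsub sg (d_A D) *m w == 0).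
Proof.
by rewrite -[RHS]trmx_eq0 trmx_mul -coord_mxK mulmxA [RHS]mulmx_free_eq0 // -trmx_mul trmx_eq0.
Qed.

Lemma ker_coord_mx_extend (w : 'cV[C]_r'.+1) : coord_mx *m w = 0 -> d_A D *m extend sg w = 0.
Proof. by move/eqP; rewrite ker_coord_mx mul_extend => /eqP. Qed.

Lemma ker_coord_mx_rowsub (v : 'cV[C]_(d_r D).+1) : d_A D *m v = 0 -> coord_mx *m rowsub sg v = 0.
Proof.
move=> /ker_partW Av; apply/eqP; rewrite ker_coord_mx -trmx_eq0 tr_mulmx_cV.
under eq_bigr do rewrite mxE col_colsub.
by rewrite -(sum_codom (fun i => v i 0 *: acol D i)) // (eq_bigl (fun i => inW i)) ?Av.
Qed.

Lemma data_ok_coord m' : data_ok (sub_data D sg coord_mx m').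
Proof.
have [_ pairD n_gt0 l_gt0] := okD; split=> [|j j' jj'|j|j x].
- exact: rank_coord_mx.
- rewrite /acol /= -(mxrankMfree _ Bfree) mul_col_mx !tr_col -!row_mul coord_mxK.
  by rewrite !row_tr_colsub pairD // (inj_eq sg_inj).
- exact: n_gt0.
- exact: l_gt0.
Qed.

End Coordinates.

Lemma exists_column_restriction : (0 < \rank W)%N ->
  exists r' (sg : 'I_r'.+1 -> 'I_(d_r D).+1) (A' : 'M[C]_((\rank W).-1.+1, r'.+1)),
    [/\ injective sg, forall i, inW i = (i \in codom sg),
        forall m', data_ok (sub_data D sg A' m'),
        forall v : 'cV_(d_r D).+1, d_A D *m v = 0 -> A' *m rowsub sg v = 0 &
        forall w : 'cV_r'.+1, A' *m w = 0 -> d_A D *m extend sg w = 0].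
Proof.
move=> rW; have [i0 i0W] := exists_col_in rW.
have [|r' [sg [sg_inj codom_sg]]] := @exists_enum _ (fun i => inW i).
  by apply/card_gt0P; exists i0.
have [B [Bfree BW]] := exists_row_basis (esym (prednK rW)).
exists r', sg, (@coord_mx _ _ sg B); split=> // [m'|v|w].
- by apply: data_ok_coord.
- by apply: ker_coord_mx_rowsub.
- by apply: ker_coord_mx_extend.
Qed.

End ColumnSplit.


Arguments cap_eq0 {R D W Wc}.
Arguments ker_partW {R D W Wc}.
Arguments exists_col_in {R D W Wc}.
Arguments exists_column_restriction {R D W Wc}.

Lemma acol_neq0 {R : realType} {D : data R} : data_ok D -> (0 < d_r D)%N ->
  forall i, acol D i != 0.
Proof.
case=> _ pairD _ _ r_gt0 i.
have [j ji] : exists j, j != i.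
  have max_neq0 : (ord_max : 'I_(d_r D).+1) != ord0 by rewrite -val_eqE /= -lt0n.
  by case: (eqVneq i ord0) => [->|]; [exists ord_max | exists ord0; rewrite eq_sym].
apply/eqP => col_i0; move: (pairD _ _ ji) (rank_leq_row (acol D j)).
by rewrite col_i0 -addsmxE addsmx0 => ->.
Qed.

Section Decomposition.
Variable R : realType.
Local Notation C := (complex R).
Variables (D : data R) (V1 V2 : 'M[C]_((d_c D).+1)).
Hypotheses (okD : data_ok D) (dirV : mxdirect (V1 + V2)).
Hypothesis colV : forall i, (acol D i <= V1)%MS \/ (acol D i <= V2)%MS.
Hypothesis acol_neq0 : forall i, acol D i != 0.

Let dirV21 : mxdirect (V2 + V1).
Proof. by apply/mxdirect_addsP; rewrite capmxC; apply/mxdirect_addsP. Qed.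

Let colV21 i : (acol D i <= V2)%MS \/ (acol D i <= V1)%MS.
Proof. by case: (colV i); [right | left]. Qed.

Lemma inV2E i : (acol D i <= V2)%MS = ~~ (acol D i <= V1)%MS.
Proof.
apply/idP/idP => [iV2 | /negPf iV1]; last by case: (colV i); rewrite ?iV1.
by apply/negP => iV1; move/eqP: (acol_neq0 i); apply; exact: (cap_eq0 dirV _ iV1 iV2).
Qed.

Lemma unique_col_rank1 : \rank V1 = 1%N ->
  exists i0, forall i, (acol D i <= V1)%MS = (i == i0).
Proof.
move=> rk1; have [|i0 i0V1] := exists_col_in dirV colV okD; first by rewrite rk1.
exists i0 => i; apply/idP/eqP => [iV1 | ->//]; apply/eqP/contraT => ii0.
have [_ pairD _ _] := okD.
have /mxrankS : (col_mx (acol D i) (acol D i0) <= V1)%MS by rewrite col_mx_sub iV1.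
by rewrite pairD // rk1.
Qed.

Lemma ker_unique_col_eq0 i0 : (forall i, (acol D i <= V1)%MS = (i == i0)) ->
  forall v : 'cV_(d_r D).+1, d_A D *m v = 0 -> v i0 0 = 0.
Proof.
move=> V1E v /(ker_partW dirV colV); rewrite (eq_bigl (pred1 i0)) // big_pred1_eq.
by move/eqP; rewrite scaler_eq0 (negPf (acol_neq0 i0)) orbF => /eqP.
Qed.

Lemma RAP_iso_rank1 : \rank V1 = 1%N -> (0 < \rank V2)%N ->
  exists D' : data R,
    [/\ data_ok D', \rank (d_A D') = \rank V2, (d_m D < d_m D')%N &
        pres_iso (RAP D) (RAP D')].
Proof.
move=> rk1 rk2; have [i0 V1E] := unique_col_rank1 rk1.
have [r' [sg [A' [sg_inj codom_sg okA' kerA kerA']]]] :=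
  exists_column_restriction dirV21 colV21 okD rk2.
have [rankA' _ _ _] := okA' 0%N.
exists (sub_data D sg A' (d_m D + d_n D i0)); split=> //.
- by rewrite /= rankA' prednK.
- by rewrite /= -[X in (X < _)%N]addn0 ltn_add2l; case: okD.
apply: RAP_iso_drop_column => // [i | v Av]; first by rewrite -codom_sg inV2E V1E.
by split; [exact: ker_unique_col_eq0 V1E v Av | exact: kerA].
Qed.

Lemma RAP_iso_split : (0 < \rank V1)%N -> (0 < \rank V2)%N ->
  exists D1 D2 : data R,
    [/\ data_ok D1, data_ok D2, \rank (d_A D1) = \rank V1, \rank (d_A D2) = \rank V2 &
        pres_iso (RAP D) (pres_tensor (RAP D1) (RAP D2))].
Proof.
move=> rk1 rk2.
have [ra [sa [Aa [sa_inj codom_sa okAa kerAa kerAa']]]] :=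
  exists_column_restriction dirV colV okD rk1.
have [rb [sb [Ab [sb_inj codom_sb okAb kerAb kerAb']]]] :=
  exists_column_restriction dirV21 colV21 okD rk2.
have [rankAa _ _ _] := okAa 0%N; have [rankAb _ _ _] := okAb 0%N.
exists (sub_data D sa Aa 0), (sub_data D sb Ab (d_m D)); split=> //.
- by rewrite /= rankAa prednK.
- by rewrite /= rankAb prednK.
apply: RAP_iso_tensor => // [i | v Av]; first by rewrite -codom_sa -codom_sb inV2E.
by split; [exact: kerAa | exact: kerAb].
Qed.

End Decomposition.

Arguments RAP_iso_rank1 {R D V1 V2}.
Arguments RAP_iso_split {R D V1 V2}.

Theorem lemma3p6 (R : realType) (D : data R)
  (V1 V2 : 'M[complex R]_((d_c D).+1)) :
  data_ok D ->
  (d_c D <= d_r D)%N -> (0 < d_c D)%N ->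
  (* C^{c+1} = V1 (+) V2 (row spaces of V1, V2) *)
  (V1 + V2 == 1%:M)%MS -> mxdirect (V1 + V2) ->
  (forall i, (acol D i <= V1)%MS \/ (acol D i <= V2)%MS) ->
  ((\rank V1 = 1%N ->
     exists D' : data R,
       [/\ data_ok D', (\rank (d_A D') < \rank (d_A D))%N,
           (d_m D < d_m D')%N & pres_iso (RAP D) (RAP D')])
  /\
   ((1 < \rank V1)%N -> (1 < \rank V2)%N ->
     exists D1 D2 : data R,
       [/\ data_ok D1, data_ok D2,
           (\rank (d_A D1) + \rank (d_A D2) = \rank (d_A D))%N &
           pres_iso (RAP D) (pres_tensor (RAP D1) (RAP D2))])).
Proof.
move=> okD le_cr c_gt0 sumV dirV colV.
have colsD := acol_neq0 okD (leq_trans c_gt0 le_cr).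
have rkV : (\rank V1 + \rank V2)%N = \rank (d_A D).
  have [-> _ _ _] := okD; rewrite -mxrank_disjoint_sum; last exact/mxdirect_addsP.
  by rewrite (eqmx_rank sumV) mxrank1.
split=> [rk1 | rk1 rk2].
  have [|D' [okD' rkD' ltm isoD']] := RAP_iso_rank1 okD dirV colV colsD rk1.
    by move: rkV; have [-> _ _ _] := okD; rewrite rk1 add1n => -[->].
  by exists D'; split=> //; rewrite rkD' -rkV rk1.
have [D1 [D2 [okD1 okD2 rkD1 rkD2 isoD]]] :=
  RAP_iso_split okD dirV colV colsD (ltnW rk1) (ltnW rk2).
by exists D1, D2; rewrite rkD1 rkD2 rkV.
Qed.
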